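(* $N[k]=N[\bar k]+N[k^\perp]$, where for measurable $j:\mathcal{X}\times\mathcal{X}\to\mathbb{R}$, $N[j]=\int_\mathcal{X}\int_\mathcal{X}j(x,y)^2\,d\mu(x)\,d\mu(y)$, $\bar k(x,y)=\int_\mathcal{G}k(x,gy)\,d\lambda(g)$ and $k^\perp=k-\bar k$.
   Context: $\mathcal{G}$ is a compact, second countable, Hausdorff topological group with Haar probability measure $\lambda$, acting measurably on a nonempty Polish space $\mathcal{X}$; $\mu$ is a $\mathcal{G}$-invariant Borel probability measure on $\mathcal{X}$ with $\mathrm{supp}\,\mu=\mathcal{X}$. $k:\mathcal{X}\times\mathcal{X}\to\mathbb{R}$ is a measurable symmetric positive definite kernel with $k(\cdot,x)$ continuous for all $x$ and $\sup_xk(x,x)<\infty$. *)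

From HB Require Import structures.
From mathcomp Require Import all_boot all_order all_algebra.
From mathcomp Require Import all_classical all_reals all_analysis.
Set Implicit Arguments. Unset Strict Implicit. Unset Printing Implicit Defensive.
Import Order.TTheory GRing.Theory Num.Theory.
Import numFieldNormedType.Exports.
Local Open Scope classical_set_scope.
Local Open Scope ring_scope.

Notation borel T := (g_sigma_algebraType (@open T)).

Definition polish_space (R : realType) (T : ptopologicalType) : Prop :=
  (exists S : set T, countable S /\ dense S) /\
  exists d : T -> T -> R,
    [/\ (forall x y, d x y = 0 <-> x = y),
        (forall x y, d x y = d y x),
        (forall x y z, d x z <= d x y + d y z),
        (forall A : set T, open A <->
           (forall x, A x -> exists2 e : R, 0 < e & [set y | d x y < e] `<=` A)) &
        (forall u : nat -> T,
           (forall e : R, 0 < e -> exists N : nat, forall m n : nat,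
               (N <= m)%N -> (N <= n)%N -> d (u m) (u n) < e) ->
           exists l : T, forall e : R, 0 < e -> exists N : nat, forall n : nat,
               (N <= n)%N -> d (u n) l < e)].

Definition compact_sc_hausdorff_group (G : ptopologicalType)
  (mul : G -> G -> G) (inv : G -> G) (one : G) : Prop :=
  [/\ (forall a b c, mul a (mul b c) = mul (mul a b) c),
      (forall a, mul one a = a /\ mul a one = a) &
      (forall a, mul (inv a) a = one /\ mul a (inv a) = one)] /\
  [/\ continuous (fun p : G * G => mul p.1 p.2),
      continuous inv,
      compact [set: G],
      @second_countable G &
      hausdorff_space G].

(* A Haar probability measure: a left-invariant Borel probability measure
   (for compact metrizable groups, every finite Borel measure is regular). *)
Definition haar_probability (R : realType) (G : ptopologicalType)
  (mul : G -> G -> G) (lam : probability (borel G) R) : Prop :=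
  forall (g : G) (A : set (borel G)), measurable A -> lam (mul g @` A) = lam A.

Definition measurable_action (G X : ptopologicalType)
  (mul : G -> G -> G) (one : G) (act : G -> X -> X) : Prop :=
  [/\ (forall x, act one x = x),
      (forall g h x, act (mul g h) x = act g (act h x)) &
      measurable_fun [set: (borel G * borel X)%type]
        ((fun p : borel G * borel X => act p.1 p.2) : _ -> borel X)].

Definition msupport (R : realType) (X : ptopologicalType)
  (mu : {measure set (borel X) -> \bar R}) : set X :=
  [set x | forall U : set X, open U -> U x -> (0 < mu U)%E].

Definition pos_def_kernel (R : realType) (X : Type) (k : X -> X -> R) : Prop :=
  forall (n : nat) (xs : 'I_n -> X) (c : 'I_n -> R),
    0 <= \sum_(i < n) \sum_(j < n) c i * c j * k (xs i) (xs j).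

Definition Nsq (R : realType) (X : ptopologicalType)
  (mu : {measure set (borel X) -> \bar R}) (j : X -> X -> R) : \bar R :=
  (\int[mu]_y \int[mu]_x ((j x y) ^+ 2)%:E)%E.

Definition kbar (R : realType) (G X : ptopologicalType)
  (lam : {measure set (borel G) -> \bar R}) (act : G -> X -> X)
  (k : X -> X -> R) : X -> X -> R :=
  fun x y => Rintegral lam [set: borel G] (fun g : borel G => k x (act g y)).

Definition kperp (R : realType) (G X : ptopologicalType)
  (lam : {measure set (borel G) -> \bar R}) (act : G -> X -> X)
  (k : X -> X -> R) : X -> X -> R :=
  fun x y => k x y - kbar lam act k x y.

From HB Require Import structures.
From mathcomp Require Import all_boot all_order all_algebra.
From mathcomp Require Import all_classical all_reals all_analysis.
From mathcomp Require Import measurable_realfun ring lra.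

(* Fix x, put f = k x and P f = kbar x, so that P f y = int_G f (g y) dlam(g).  The left
   Haar probability of a compact group is invariant under inversion, hence right invariant,
   so P f is G-invariant.  As mu is G-invariant too, Fubini gives
     int (P f)^2 dmu = int_G int (P f)(y) f (g y) dmu dlam
                     = int_G int (P f)(g y) f (g y) dmu dlam = int (P f) f dmu,
   i.e. f - P f is orthogonal to P f in L^2(mu), whence
   int f^2 = int (P f)^2 + int (f - P f)^2; integrate in x.  All integrands are bounded,
   because positive definiteness bounds |k x y| by sup_x k x x. *)

Set Implicit Arguments.
Unset Strict Implicit.
Unset Printing Implicit Defensive.

Import Order.TTheory GRing.Theory Num.Theory.
Import numFieldNormedType.Exports.
Local Open Scope classical_set_scope.
Local Open Scope ring_scope.

Lemma continuous_borel_measurable (S T : ptopologicalType) (f : S -> T) :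
  continuous f -> measurable_fun [set: borel S] (f : borel S -> borel T).
Proof.
move=> /continuousP f_open.
apply: (@measurability _ _ (borel S) (borel T) setT f (@open T) erefl) => _ [B oB <-].
by apply: sub_sigma_algebra; rewrite setTI; exact: f_open.
Qed.

Section bounded_integral.
Context {R : realType} d (T : measurableType d) (P : probability T R).
Implicit Types (f g : T -> R) (M N : R).

Let P_setT : (P : {measure set T -> \bar R}) setT = 1%E := probability_setT P.

Lemma bounded_integrable f M : measurable_fun setT f ->
  (forall x, `|f x| <= M) -> P.-integrable setT (EFin \o f).
Proof.
move=> mf fM; apply: measurable_bounded_integrable => //.
  by rewrite P_setT ltry.
exists M; split; first exact: ger0_real (le_trans (normr_ge0 _) (fM point)).
by move=> N MN x _; exact: le_trans (fM x) (ltW MN).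
Qed.

Lemma bounded_integrableM f g M N : measurable_fun setT f -> measurable_fun setT g ->
  (forall x, `|f x| <= M) -> (forall x, `|g x| <= N) ->
  P.-integrable setT (EFin \o (f \* g)).
Proof.
move=> mf mg fM gN; apply: (@bounded_integrable _ (M * N)).
  exact: measurable_funM.
by move=> x; rewrite normrM ler_pM.
Qed.

Lemma integral_Rintegral f M : measurable_fun setT f -> (forall x, `|f x| <= M) ->
  (\int[P]_x (f x)%:E)%E = (Rintegral P setT f)%:E.
Proof.
by move=> mf fM; rewrite fineK// integrable_fin_num// (bounded_integrable mf fM).
Qed.

Lemma integral_sqr_Rintegral f M : measurable_fun setT f -> (forall x, `|f x| <= M) ->
  (\int[P]_x (f x ^+ 2)%:E)%E = (Rintegral P setT (fun x => f x ^+ 2))%:E.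
Proof.
move=> mf fM; apply: (integral_Rintegral (M := M * M)); first exact: measurable_funX.
by move=> x; rewrite normrX ler_pXn2r ?nnegrE// (le_trans _ (fM x)).
Qed.

Lemma Rintegral_probability_cst (c : R) : Rintegral P setT (fun=> c) = c.
Proof. by rewrite Rintegral_cst// P_setT mulr1. Qed.

Lemma normr_Rintegral_le f M : measurable_fun setT f -> (forall x, `|f x| <= M) ->
  `|Rintegral P setT f| <= M.
Proof.
move=> mf fM; rewrite (le_trans (le_normr_Rintegral _ _))//.
  exact: bounded_integrable mf fM.
rewrite -[leRHS]Rintegral_probability_cst le_Rintegral//.
- apply: (@bounded_integrable (Num.norm \o f) M); first exact: measurableT_comp.
  by move=> x; rewrite normr_id.
- by apply: (@bounded_integrable _ `|M|) => // x.
Qed.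

Lemma Rintegral_pythagoras f g M : measurable_fun setT f -> measurable_fun setT g ->
  (forall x, `|f x| <= M) -> (forall x, `|g x| <= M) ->
  Rintegral P setT (fun x => g x * (f x - g x)) = 0 ->
  Rintegral P setT (fun x => f x ^+ 2) =
  Rintegral P setT (fun x => g x ^+ 2) + Rintegral P setT (fun x => (f x - g x) ^+ 2).
Proof.
move=> mf mg fM gM orth.
have mfg : measurable_fun setT (f \- g) := measurable_funB mf mg.
have fgM x : `|(f \- g) x| <= M + M := le_trans (ler_normB _ _) (lerD (fM x) (gM x)).
have ig := bounded_integrableM mg mg gM gM.
have ifg := bounded_integrableM mfg mfg fgM fgM.
have igfg := bounded_integrableM mg mfg gM fgM.
transitivity (Rintegral P setT (fun x =>
    (g x * g x + (f x - g x) * (f x - g x)) + 2 * (g x * (f x - g x)))).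
  by apply: eq_Rintegral => x _; ring.
have isum : P.-integrable setT (EFin \o (fun x => g x * g x + (f x - g x) * (f x - g x))).
  exact: (integrableD _ ig ifg).
rewrite RintegralD//; last exact: (integrableZl _ 2 igfg).
rewrite RintegralZl// orth mulr0 addr0 RintegralD//.
Qed.

Lemma Rintegral_comp_measure_preserving (phi : T -> T) f M : measurable_fun setT phi ->
  (forall A, measurable A -> P (phi @^-1` A) = P A) ->
  measurable_fun setT f -> (forall x, `|f x| <= M) ->
  Rintegral P setT (f \o phi) = Rintegral P setT f.
Proof.
move=> mphi Pphi mf fM; rewrite /Rintegral; congr fine.
have ifphi : P.-integrable (phi @^-1` setT) (EFin \o f \o phi).
  rewrite preimage_setT.
  exact: bounded_integrable (measurableT_comp mf mphi) (fun x => fM (phi x)).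
rewrite -[LHS](integral_pushforward mphi _ ifphi)//; last exact/measurable_EFinP.
by apply: eq_measure_integral => A mA _; exact: Pphi.
Qed.

End bounded_integral.

Section bounded_fubini.
Context {R : realType} d1 d2 (T1 : measurableType d1) (T2 : measurableType d2)
  (P1 : probability T1 R) (P2 : probability T2 R).
Variables (F : T1 * T2 -> R) (M : R).
Hypotheses (mF : measurable_fun setT F) (FM : forall z, `|F z| <= M).

Let F_integrable : (P1 \x P2)%E.-integrable setT (EFin \o F) :=
  bounded_integrable _ mF FM.

Let xsection_Rintegral x :
  (\int[P2]_y (F (x, y))%:E)%E = (Rintegral P2 setT (fun y => F (x, y)))%:E.
Proof. exact (integral_Rintegral P2 (measurable_fun_pair2 x mF) (fun y => FM (x, y))). Qed.

Let ysection_Rintegral y :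
  (\int[P1]_x (F (x, y))%:E)%E = (Rintegral P1 setT (fun x => F (x, y)))%:E.
Proof. exact (integral_Rintegral P1 (measurable_fun_pair1 y mF) (fun x => FM (x, y))). Qed.

Lemma measurable_Rintegral_section :
  measurable_fun setT (fun x => Rintegral P2 setT (fun y => F (x, y))).
Proof.
apply/measurable_EFinP; rewrite (_ : _ \o _ = fubini_F P2 (EFin \o F)).
  exact: (measurable_fubini_F (m1 := P1) F_integrable).
by apply/funext => x; rewrite /fubini_F /= xsection_Rintegral.
Qed.

Lemma Rintegral_swap :
  Rintegral P1 setT (fun x => Rintegral P2 setT (fun y => F (x, y))) =
  Rintegral P2 setT (fun y => Rintegral P1 setT (fun x => F (x, y))).
Proof.
rewrite /Rintegral; congr fine.
under eq_integral do rewrite -xsection_Rintegral.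
under [RHS]eq_integral do rewrite -ysection_Rintegral.
exact: (Fubini F_integrable).
Qed.

End bounded_fubini.

Lemma pos_def_kernel_normr_le {R : realType} (X : Type) (k : X -> X -> R) M :
  (forall x y, k x y = k y x) -> pos_def_kernel k -> (forall x, k x x <= M) ->
  forall x y, `|k x y| <= M.
Proof.
move=> k_sym k_pd kM x y.
pose xs (i : 'I_2) := if val i == 0%N then x else y.
(* the Gram forms of [x; y] at [1; -1] and [1; 1] give [0 <= k x x -+ 2 k x y + k y y] *)
have := k_pd 2%N xs (fun i => if val i == 0%N then 1 else -1).
have := k_pd 2%N xs (fun=> 1).
rewrite !big_ord_recr !big_ord0 /= (k_sym y x) => Gp Gm.
have := kM x; have := kM y; rewrite ler_norml; lra.
Qed.

Section Nsq.
Context {R : realType} (X : ptopologicalType) (mu : probability (borel X) R).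
Implicit Type j : X -> X -> R.

Let sqr_integrand j (p : borel X * borel X) : \bar R := ((j p.1 p.2) ^+ 2)%:E.

Let measurable_sqr_integrand j :
  measurable_fun setT (fun p : borel X * borel X => j p.1 p.2) ->
  measurable_fun setT (sqr_integrand j).
Proof. by move=> mj; apply/measurable_EFinP; exact: measurable_funX. Qed.

Let sqr_integrand_ge0 j p : (0 <= sqr_integrand j p)%E.
Proof. by rewrite lee_fin sqr_ge0. Qed.

Lemma Nsq_swap j : measurable_fun setT (fun p : borel X * borel X => j p.1 p.2) ->
  Nsq mu j = (\int[mu]_x \int[mu]_y ((j x y) ^+ 2)%:E)%E.
Proof.
move=> mj; apply/esym.
exact: (fubini_tonelli _ (measurable_sqr_integrand mj) (sqr_integrand_ge0 j)).
Qed.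

Lemma Nsq_split j j1 j2 :
  measurable_fun setT (fun p : borel X * borel X => j p.1 p.2) ->
  measurable_fun setT (fun p : borel X * borel X => j1 p.1 p.2) ->
  measurable_fun setT (fun p : borel X * borel X => j2 p.1 p.2) ->
  (forall x, \int[mu]_y ((j x y) ^+ 2)%:E =
             \int[mu]_y ((j1 x y) ^+ 2)%:E + \int[mu]_y ((j2 x y) ^+ 2)%:E)%E ->
  Nsq mu j = (Nsq mu j1 + Nsq mu j2)%E.
Proof.
move=> mj mj1 mj2 rows; rewrite !Nsq_swap// -ge0_integralD//.
- by apply: eq_integral => x _; exact: rows.
- by move=> x _; apply: integral_ge0 => y _; rewrite lee_fin sqr_ge0.
- exact: (measurable_fun_fubini_tonelli_F (m2 := mu))
    (measurable_sqr_integrand mj1) (sqr_integrand_ge0 j1).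
- by move=> x _; apply: integral_ge0 => y _; rewrite lee_fin sqr_ge0.
- exact: (measurable_fun_fubini_tonelli_F (m2 := mu))
    (measurable_sqr_integrand mj2) (sqr_integrand_ge0 j2).
Qed.

End Nsq.

Section orbit_mean.
Context {R : realType} (G X : ptopologicalType) (mul : G -> G -> G) (inv : G -> G)
  (one : G) (lam : probability (borel G) R) (act : G -> X -> X)
  (mu : probability (borel X) R).
Hypotheses (mulA : forall a b c, mul a (mul b c) = mul (mul a b) c)
  (mul1g : forall a, mul one a = a) (mulg1 : forall a, mul a one = a)
  (mulVg : forall a, mul (inv a) a = one) (mulgV : forall a, mul a (inv a) = one).
Hypotheses (measurable_mul : forall g, measurable_fun setT (mul g : borel G -> borel G))
  (measurable_inv : measurable_fun setT (inv : borel G -> borel G)).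
Hypothesis lam_mul : forall g (A : set (borel G)),
  measurable A -> lam (mul g @^-1` A) = lam A.
Hypotheses (act_mul : forall g h x, act (mul g h) x = act g (act h x))
  (measurable_act : measurable_fun setT
     ((fun p : borel G * borel X => act p.1 p.2) : _ -> borel X)).
Hypothesis mu_act : forall g (A : set (borel X)),
  measurable A -> mu (act g @^-1` A) = mu A.

Let invK a : inv (inv a) = a.
Proof. by rewrite -[LHS]mulg1 -(mulVg a) mulA mulVg mul1g. Qed.

Let invM a b : inv (mul a b) = mul (inv b) (inv a).
Proof.
have ab_inv : mul (mul a b) (mul (inv b) (inv a)) = one.
  by rewrite -mulA (mulA b) mulgV mul1g mulgV.
by rewrite -[LHS]mulg1 -ab_inv mulA mulVg mul1g.
Qed.

Let measurable_act_pair d (T : measurableType d) (u : T -> borel G) (v : T -> borel X) :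
  measurable_fun setT u -> measurable_fun setT v ->
  measurable_fun setT (fun t => act (u t) (v t) : borel X).
Proof.
by move=> mu' mv; exact: measurableT_comp measurable_act (measurable_fun_pair mu' mv).
Qed.

Let measurable_act_l g : measurable_fun setT (act g : borel X -> borel X).
Proof. exact: measurableT_comp measurable_act (pair1_measurable (g : borel G)). Qed.

Let Rintegral_mul g (F : borel G -> R) N : measurable_fun setT F ->
  (forall u, `|F u| <= N) -> Rintegral lam setT (fun h => F (mul g h)) = Rintegral lam setT F.
Proof. exact: Rintegral_comp_measure_preserving (measurable_mul g) (lam_mul g). Qed.

Definition orbit_mean (f : X -> R) (z : X) : R :=
  Rintegral lam setT (fun g : borel G => f (act g z)).

Section bounded_function.
Variables (f : borel X -> R) (M : R).
Hypotheses (mf : measurable_fun setT f) (fM : forall x, `|f x| <= M).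

Let measurable_orbit z : measurable_fun setT (fun g : borel G => f (act g z)).
Proof.
exact: measurableT_comp mf (measurableT_comp measurable_act (pair2_measurable (z : borel X))).
Qed.

Let measurable_orbit_inv z : measurable_fun setT (fun g : borel G => f (act (inv g) z)).
Proof. exact: measurableT_comp (measurable_orbit z) measurable_inv. Qed.

(* Integrate f ((inv g * h) z) in both orders: left invariance of [lam] eliminates h in
   one order and g in the other. *)
Lemma Rintegral_orbit_inv z :
  Rintegral lam setT (fun g => f (act (inv g) z)) = orbit_mean f z.
Proof.
pose Phi (p : borel G * borel G) := f (act (inv p.1) (act p.2 z)).
have mPhi : measurable_fun setT Phi.
  apply: measurableT_comp mf _; apply: measurable_act_pair.
    exact: measurableT_comp measurable_inv measurable_fst.
  exact: measurable_act_pair measurable_snd (measurable_cst (z : borel X)).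
have inner_h g : Rintegral lam setT (fun h => Phi (g, h)) = orbit_mean f z.
  rewrite -[RHS](Rintegral_mul (inv g) (measurable_orbit z) (fun u => fM _)).
  by apply: eq_Rintegral => h _; rewrite /Phi act_mul.
have inner_g h : Rintegral lam setT (fun g => Phi (g, h)) =
    Rintegral lam setT (fun g => f (act (inv g) z)).
  rewrite -[RHS](Rintegral_mul (inv h) (measurable_orbit_inv z) (fun u => fM _)).
  by apply: eq_Rintegral => g _; rewrite /Phi invM invK act_mul.
have := Rintegral_swap lam lam mPhi (fun p => fM _).
under eq_Rintegral do rewrite inner_h.
under [X in _ = X]eq_Rintegral do rewrite inner_g.
by rewrite !Rintegral_probability_cst.
Qed.

Lemma orbit_mean_act g z : orbit_mean f (act g z) = orbit_mean f z.
Proof.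
rewrite -!Rintegral_orbit_inv.
rewrite -[RHS](Rintegral_mul (inv g) (measurable_orbit_inv z) (fun u => fM _)).
by apply: eq_Rintegral => u _; rewrite invM invK act_mul.
Qed.

Lemma measurable_orbit_mean : measurable_fun setT (orbit_mean f : borel X -> R).
Proof.
apply: (@measurable_Rintegral_section _ _ _ _ _ mu lam
  (fun p : borel X * borel G => f (act p.2 p.1)) M) => [|p]; last exact: fM.
by apply: measurableT_comp mf _; exact: measurable_act_pair measurable_snd measurable_fst.
Qed.

Lemma normr_orbit_mean_le z : `|orbit_mean f z| <= M.
Proof. exact: normr_Rintegral_le (measurable_orbit z) (fun g => fM _). Qed.

Lemma Rintegral_mul_orbit_mean (h : borel X -> R) N : measurable_fun setT h ->
  (forall x, `|h x| <= N) -> (forall g x, h (act g x) = h x) ->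
  Rintegral mu setT (fun x => h x * orbit_mean f x) = Rintegral mu setT (fun x => h x * f x).
Proof.
move=> mh hN h_act.
pose Phi (p : borel X * borel G) := h p.1 * f (act p.2 p.1).
have mPhi : measurable_fun setT Phi.
  apply: measurable_funM; first exact: measurableT_comp mh measurable_fst.
  by apply: measurableT_comp mf _; exact: measurable_act_pair measurable_snd measurable_fst.
have PhiM p : `|Phi p| <= N * M by rewrite normrM ler_pM.
transitivity (Rintegral mu setT (fun x => Rintegral lam setT (fun g => Phi (x, g)))).
  apply: eq_Rintegral => x _; rewrite /Phi /= RintegralZl//.
  exact: (bounded_integrable _ (measurable_orbit x) (fun g => fM (act g x))).
rewrite (Rintegral_swap mu lam mPhi PhiM) -[RHS](Rintegral_probability_cst lam).
apply: eq_Rintegral => g _.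
rewrite -[RHS](Rintegral_comp_measure_preserving (M := N * M) (measurable_act_l g) (mu_act g)).
- by apply: eq_Rintegral => x _; rewrite /Phi /= h_act.
- exact: measurable_funM.
- by move=> x; rewrite normrM ler_pM.
Qed.

Lemma Rintegral_sqr_orbit_mean :
  Rintegral mu setT (fun x => f x ^+ 2) =
  Rintegral mu setT (fun x => orbit_mean f x ^+ 2) +
  Rintegral mu setT (fun x => (f x - orbit_mean f x) ^+ 2).
Proof.
have mPf := measurable_orbit_mean; have PfM := normr_orbit_mean_le.
apply: (Rintegral_pythagoras mf mPf fM PfM).
under eq_Rintegral do rewrite mulrBr.
rewrite RintegralB//; first by rewrite (Rintegral_mul_orbit_mean mPf PfM orbit_mean_act) subrr.
- exact: (bounded_integrableM mu mPf mf PfM fM).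
- exact: (bounded_integrableM mu mPf mPf PfM PfM).
Qed.

End bounded_function.

Section kernel.
Variables (k : X -> X -> R) (M : R).
Hypotheses (mk : measurable_fun setT (fun p : borel X * borel X => k p.1 p.2))
  (kM : forall x y, `|k x y| <= M).

Let measurable_row x : measurable_fun setT (k x : borel X -> R).
Proof. exact: measurable_fun_pair2 (x : borel X) mk. Qed.

Lemma measurable_kbar :
  measurable_fun setT (fun p : borel X * borel X => kbar lam act k p.1 p.2).
Proof.
have mpair : measurable_fun setT (fun q : (borel X * borel X) * borel G =>
    ((q.1.1, act q.2 q.1.2) : borel X * borel X)).
  apply: measurable_fun_pair; first exact: measurableT_comp measurable_fst measurable_fst.
  exact: measurable_act_pair measurable_snd (measurableT_comp measurable_snd measurable_fst).
apply: (@measurable_Rintegral_section _ _ _ _ _ (mu \x mu)%E lam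
  (fun q : (borel X * borel X) * borel G => k q.1.1 (act q.2 q.1.2)) M) => [|q].
  exact: measurableT_comp mk mpair.
exact: kM.
Qed.

Lemma Nsq_kbar_kperp :
  Nsq mu k = (Nsq mu (kbar lam act k) + Nsq mu (kperp lam act k))%E.
Proof.
(* [kbar lam act k x] is [orbit_mean (k x)] by definition. *)
have mkbar x := measurable_orbit_mean (measurable_row x) (kM x).
have kbarM x := normr_orbit_mean_le (measurable_row x) (kM x).
have mkperp x := measurable_funB (measurable_row x) (mkbar x).
have kperpM x y : `|kperp lam act k x y| <= M + M.
  exact: le_trans (ler_normB _ _) (lerD (kM x y) (kbarM x y)).
apply: Nsq_split => //; first exact: measurable_kbar.
  exact: measurable_funB mk measurable_kbar.
move=> x; rewrite (integral_sqr_Rintegral mu (measurable_row x) (kM x)).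
rewrite (integral_sqr_Rintegral mu (mkbar x) (kbarM x)).
rewrite (integral_sqr_Rintegral mu (mkperp x) (kperpM x)) -EFinD.
by rewrite (Rintegral_sqr_orbit_mean (measurable_row x) (kM x)).
Qed.

End kernel.

End orbit_mean.

Theorem lemma5p10 (R : realType) (G X : ptopologicalType)
  (mul : G -> G -> G) (inv : G -> G) (one : G)
  (lam : probability (borel G) R)
  (act : G -> X -> X)
  (mu : probability (borel X) R)
  (k : X -> X -> R) :
  compact_sc_hausdorff_group mul inv one ->
  haar_probability mul lam ->
  polish_space R X ->
  measurable_action mul one act ->
  (forall (g : G) (A : set (borel X)), measurable A ->
     mu (act g @^-1` A) = mu A) ->
  msupport mu = [set: X] ->
  measurable_fun [set: (borel X * borel X)%type]
    (fun p : borel X * borel X => k p.1 p.2) ->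
  (forall x y, k x y = k y x) ->
  pos_def_kernel k ->
  (forall x : X, continuous (fun y : X => k y x)) ->
  (exists M : R, forall x, k x x <= M) ->
  Nsq mu k = (Nsq mu (kbar lam act k) + Nsq mu (kperp lam act k))%E.
Proof.
move=> [[mulA unit inverse] [mul_cont inv_cont _ _ _]] haar _ [_ act_mul mact] mu_act _
  mk k_sym k_pd _ [M kM].
have mul1g a : mul one a = a by case: (unit a).
have mulg1 a : mul a one = a by case: (unit a).
have mulVg a : mul (inv a) a = one by case: (inverse a).
have mulgV a : mul a (inv a) = one by case: (inverse a).
have measurable_mul g : measurable_fun setT (mul g : borel G -> borel G).
  apply: continuous_borel_measurable => h.
  apply: (@continuous_comp _ _ _ (pair g) (fun p : G * G => mul p.1 p.2)).
    exact: cvg_pair (cvg_cst g) cvg_id.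
  exact: mul_cont.
have lam_mul g (A : set (borel G)) : measurable A -> lam (mul g @^-1` A) = lam A.
  move=> mA; rewrite -(haar (inv g) A mA); congr (lam _).
  apply/seteqP; split => [a Aga|_ [a Aa <-]]; last by rewrite /= mulA mulgV mul1g.
  by exists (mul g a); rewrite // mulA mulVg mul1g.
exact: (Nsq_kbar_kperp mulA mul1g mulg1 mulVg mulgV measurable_mul
  (continuous_borel_measurable inv_cont) lam_mul act_mul mact mu_act mk
  (pos_def_kernel_normr_le k_sym k_pd kM)).
Qed.
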